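(* Let $R=\{(1,1),(2,1),(1,2),(1,3),(1,4)\}$. Then: (1) for all integers $n>1$, $\mathcal{S}(n)\subseteq R$; (2) for every $(\alpha,\beta)\in R$ there exists an $n$ with $(\alpha,\beta)\in\mathcal{S}(n)$; (3) the set of positive integers $n$ with $\mathcal{S}(n)=\{(1,1)\}$ has density $1$, i.e. $\lim_{N\to\infty}N^{-1}|\{n\le N:\mathcal{S}(n)=\{(1,1)\}\}|=1$.
   Context: For relatively prime positive integers $\alpha,\beta$ and positive integers $a_1,a_2$, the $(\alpha,\beta)$-walk $w^{\alpha,\beta}_k(a_1,a_2)$ is given by $w_1=a_1$, $w_2=a_2$, $w_{k+2}=\alpha w_{k+1}+\beta w_k$ ($k\ge1$). For a positive integer $n$, $s^{\alpha,\beta}(n;a_1,a_2)$ is the (largest) index $s$ with $w^{\alpha,\beta}_s(a_1,a_2)=n$ ($-\infty$ if none), and $s^{\alpha,\beta}(n)=\max_{a_1,a_2\ge1}s^{\alpha,\beta}(n;a_1,a_2)$. Define $\bar s(n)=\max\{s^{\alpha,\beta}(n):\alpha,\beta\ge1,\gcd(\alpha,\beta)=1\}$ and $\mathcal{S}(n)=\{(\alpha,\beta):\alpha,\beta\ge1,\ \gcd(\alpha,\beta)=1,\ s^{\alpha,\beta}(n)=\bar s(n)\}$. *)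

From HB Require Import structures.
From mathcomp Require Import all_boot all_order all_algebra.
From mathcomp Require Import all_classical all_reals all_analysis.
Set Implicit Arguments. Unset Strict Implicit. Unset Printing Implicit Defensive.

(* wpair k = (w_{k+1}, w_{k+2}) of the (alpha,beta)-walk started at a1, a2. *)
Fixpoint wpair (alpha beta a1 a2 k : nat) : nat * nat :=
  match k with
  | 0 => (a1, a2)
  | k'.+1 => let p := wpair alpha beta a1 a2 k' in
             (p.2, alpha * p.2 + beta * p.1)
  end.

(* walk alpha beta a1 a2 k = w^{alpha,beta}_k(a1,a2), for indices k >= 1:
   w_1 = a1, w_2 = a2, w_{k+2} = alpha w_{k+1} + beta w_k. *)
Definition walk (alpha beta a1 a2 k : nat) : nat :=
  (wpair alpha beta a1 a2 k.-1).1.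

Definition is_greatest (P : nat -> Prop) (m : nat) : Prop :=
  P m /\ forall k, P k -> k <= m.

Definition hits (alpha beta a1 a2 n s : nat) : Prop :=
  1 <= s /\ walk alpha beta a1 a2 s = n.

(* s^{alpha,beta}(n;a1,a2) = m  (the case -oo corresponds to no index hitting n) *)
Definition s_start (alpha beta n a1 a2 m : nat) : Prop :=
  is_greatest (hits alpha beta a1 a2 n) m.

Definition s_ab (alpha beta n m : nat) : Prop :=
  is_greatest (fun s => exists a1 a2, 0 < a1 /\ 0 < a2 /\ s_start alpha beta n a1 a2 s) m.

Definition sbar (n m : nat) : Prop :=
  is_greatest (fun s => exists alpha beta,
                 [/\ 0 < alpha, 0 < beta, coprime alpha beta & s_ab alpha beta n s]) m.

Definition inS (n alpha beta : nat) : Prop :=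
  [/\ 0 < alpha, 0 < beta, coprime alpha beta &
      exists m, s_ab alpha beta n m /\ sbar n m].

Definition Rset (p : nat * nat) : Prop :=
  p = (1,1) \/ p = (2,1) \/ p = (1,2) \/ p = (1,3) \/ p = (1,4).

Definition S_is_11 (n : nat) : Prop :=
  forall alpha beta, inS n alpha beta <-> (alpha = 1 /\ beta = 1).

(* Outside R = {(1,1),(2,1),(1,2),(1,3),(1,4)} a walk grows at least like
   F_{2k}: w_k >= F_{2k-1}/2 > F_{k-1} F_k.  Since consecutive Fibonacci numbers
   are coprime, every n > F_{k-1} F_k is F_{k-1} x + F_k y with x, y >= 1, i.e. it
   is hit at index k + 1 by the (1,1)-walk started at (x, y).  So pairs outside R
   never attain \bar s(n), and each pair of R attains it for an explicit n.
   If S(n) <> {(1,1)} and n > F_{j+1} F_{j+2}, then some pair of R other than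
   (1,1) hits n at index j + 3, so n = P x + Q y for the coefficients P, Q of that
   walk.  Their product grows like 4^j, faster than F_{j+1} F_{j+2} ~ phi^{2j}, so
   for j chosen with D F_{j+1} F_{j+2} <= N there are O(N / D) such n <= N. *)

From Stdlib Require Import ZArith Lia.
From HB Require Import structures.
From mathcomp Require Import all_boot all_order all_algebra.
From mathcomp Require Import all_classical all_reals all_analysis.
From mathcomp Require Import zify lra.
Import Order.TTheory GRing.Theory Num.Theory.
Import numFieldNormedType.Exports.
Set Implicit Arguments. Unset Strict Implicit. Unset Printing Implicit Defensive.

(** * Walks and their maximal indices *)

Lemma nat_ind2 (P : nat -> Prop) :
  P 0 -> P 1 -> (forall j, P j -> P j.+1 -> P j.+2) -> forall j, P j.
Proof.
move=> P0 P1 PSS j; suff [] : P j /\ P j.+1 by [].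
by elim: j => [|j [Pj Pj1]]; split=> //; apply: PSS.
Qed.

Lemma is_greatest_exists (P : nat -> Prop) b :
  (exists k, P k) -> (forall k, P k -> k <= b) -> exists m, is_greatest P m.
Proof.
move=> [k Pk] Pb.
have exP : exists k, `[< P k >] by exists k; apply/asboolP.
have ub j : `[< P j >] -> j <= b by move/asboolP; apply: Pb.
have [m /asboolP Pm maxm] := ex_maxnP exP ub.
by exists m; split=> // j Pj; apply/maxm/asboolP.
Qed.

Lemma is_greatest_unique P m m' : is_greatest P m -> is_greatest P m' -> m = m'.
Proof. by move=> [Pm maxm] [Pm' maxm']; apply/eqP; rewrite eqn_leq maxm // maxm'. Qed.

Lemma is_greatest_sup (P : nat -> nat -> nat -> Prop) b m :
  (forall a1 a2 k, 0 < a1 -> 0 < a2 -> P a1 a2 k -> k <= b) ->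
  is_greatest (fun s => exists a1 a2, 0 < a1 /\ 0 < a2 /\ is_greatest (P a1 a2) s) m <->
  is_greatest (fun k => exists a1 a2, 0 < a1 /\ 0 < a2 /\ P a1 a2 k) m.
Proof.
move=> Pb; have sup_ge a1 a2 k : 0 < a1 -> 0 < a2 -> P a1 a2 k ->
    exists2 s, k <= s & is_greatest (P a1 a2) s.
  move=> a1_gt0 a2_gt0 Pk.
  have [s [Ps maxs]] := is_greatest_exists (ex_intro _ k Pk) (fun j => Pb _ _ j a1_gt0 a2_gt0).
  by exists s; [apply: maxs | split].
split=> [[[a1 [a2 [a1_gt0 [a2_gt0 [Pm _]]]]] maxm] | [[a1 [a2 [a1_gt0 [a2_gt0 Pm]]]] maxm]].
  split=> [|k [b1 [b2 [b1_gt0 [b2_gt0 Pk]]]]]; first by exists a1, a2.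
  have [s ks maxs] := sup_ge _ _ _ b1_gt0 b2_gt0 Pk.
  by apply: leq_trans ks (maxm _ _); exists b1, b2.
have [s ms [Ps maxs]] := sup_ge _ _ _ a1_gt0 a2_gt0 Pm.
have sm : s <= m by apply: maxm; exists a1, a2.
split=> [|k [b1 [b2 [b1_gt0 [b2_gt0 [Pk _]]]]]]; last by apply: maxm; exists b1, b2.
by exists a1, a2; do 2!split=> //; rewrite (@anti_leq m s) ?ms ?sm; split.
Qed.

Definition wseq (al be a1 a2 j : nat) : nat := (wpair al be a1 a2 j).1.
Arguments wseq al be a1 a2 j : simpl never.

Section Walks.
Variables al be : nat.

Lemma wseqSS a1 a2 j :
  wseq al be a1 a2 j.+2 = al * wseq al be a1 a2 j.+1 + be * wseq al be a1 a2 j.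
Proof. by []. Qed.

Lemma walkE a1 a2 k : walk al be a1 a2 k = wseq al be a1 a2 k.-1.
Proof. by []. Qed.

Lemma wpairD a1 a2 i j :
  wpair al be a1 a2 (i + j) =
  wpair al be (wpair al be a1 a2 i).1 (wpair al be a1 a2 i).2 j.
Proof.
elim: j => [|j IHj]; first by rewrite addn0; case: (wpair _ _ _ _ i).
by rewrite addnS /= IHj.
Qed.

Lemma wseq_shift a1 a2 j :
  wseq al be a1 a2 j.+1 = wseq al be a2 (al * a2 + be * a1) j.
Proof. by rewrite /wseq -add1n wpairD. Qed.

Lemma wseq_lin a1 a2 j :
  wseq al be a1 a2 j = wseq al be 1 0 j * a1 + wseq al be 0 1 j * a2.
Proof.
elim/nat_ind2: j => [||j IH0 IH1]; [by rewrite /wseq /=; lia.. |].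
by rewrite !wseqSS IH0 IH1; lia.
Qed.

Lemma wseq_ge_index a1 a2 j : 0 < al -> 0 < be -> 0 < a1 -> 0 < a2 ->
  j <= wseq al be a1 a2 j.
Proof.
move=> al_gt0 be_gt0 a1_gt0 a2_gt0.
suff [] : j <= wseq al be a1 a2 j /\ 0 < wseq al be a1 a2 j by [].
by elim/nat_ind2: j => [||j [IH0 pos0] [IH1 pos1]] //; rewrite wseqSS; nia.
Qed.

End Walks.

Definition reaches (al be n k : nat) : Prop :=
  exists a1 a2, 0 < a1 /\ 0 < a2 /\ hits al be a1 a2 n k.

Section Reaches.
Variables al be n : nat.
Hypotheses (al_gt0 : 0 < al) (be_gt0 : 0 < be).

Lemma reaches_bound k : reaches al be n k -> k <= n.+1.
Proof.
move=> [a1 [a2 [a1_gt0 [a2_gt0 [_]]]]]; rewrite walkE => <-.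
by have := wseq_ge_index k.-1 al_gt0 be_gt0 a1_gt0 a2_gt0; lia.
Qed.

Lemma s_abE m : s_ab al be n m <-> is_greatest (reaches al be n) m.
Proof.
apply: (is_greatest_sup (b := n.+1)) => a1 a2 k a1_gt0 a2_gt0 hk.
by apply: reaches_bound; exists a1, a2.
Qed.

Lemma s_ab_exists : 0 < n -> exists m, s_ab al be n m.
Proof.
move=> n_gt0; have [m ?] : exists m, is_greatest (reaches al be n) m.
  apply: (is_greatest_exists (b := n.+1)); last exact: reaches_bound.
  by exists 1, n, 1.
by exists m; apply/s_abE.
Qed.

Lemma reaches_gt0 k : reaches al be n k -> 0 < k.
Proof. by move=> [a1 [a2 [_ [_ []]]]]. Qed.

Lemma reaches_pred k : reaches al be n k.+2 -> reaches al be n k.+1.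
Proof.
move=> [a1 [a2 [a1_gt0 [a2_gt0 [_ hw]]]]].
exists a2, (al * a2 + be * a1); do 2!split=> //; first by nia.
by split=> //; rewrite walkE -wseq_shift.
Qed.

Lemma reaches_le j k : 0 < j -> j <= k -> reaches al be n k -> reaches al be n j.
Proof.
move=> j_gt0 /subnK <-; elim: (k - j) => [|d IHd] // hk.
by apply: IHd; move: hk; rewrite addSn -(prednK j_gt0) addnS; apply: reaches_pred.
Qed.

End Reaches.

(** * Fibonacci numbers and the (1,1)-walk *)

Fixpoint fib (n : nat) : nat :=
  if n is (m.+1 as k).+1 then fib k + fib m else n.

Lemma fibSS n : fib n.+2 = fib n.+1 + fib n. Proof. by []. Qed.

Lemma fib_gt0 n : 0 < fib n.+1.
Proof. by elim/nat_ind2: n => // n IH0 IH1; rewrite fibSS addn_gt0 IH1. Qed.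

Lemma fib_ltS n : 1 < n -> fib n < fib n.+1.
Proof. by case: n => [|[|n]] // _; rewrite (fibSS n.+1) -addn1 leq_add2l fib_gt0. Qed.

Lemma leq_fib n : n <= fib n.+1.
Proof.
elim/nat_ind2: n => // n IH0 IH1; rewrite fibSS.
by case: n IH0 IH1 => // n IH0 IH1; lia.
Qed.

Lemma fib_coprime n : coprime (fib n) (fib n.+1).
Proof.
by elim: n => // n IHn; rewrite /coprime fibSS gcdnDl -/(coprime _ _) coprime_sym.
Qed.

Lemma fib_doubling n :
  fib (2 * n).+1 = fib n.+1 ^ 2 + fib n ^ 2 /\
  fib (2 * n).+2 = fib n.+1 * (fib n.+1 + 2 * fib n).
Proof.
elim: n => // n [IH1 IH2].
have -> : 2 * n.+1 = (2 * n).+2 by rewrite mulnS.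
by rewrite (fibSS (2 * n).+2) !(fibSS (2 * n).+1) IH1 IH2 (fibSS n); split; nia.
Qed.

Lemma fib_add4 n : fib n.+4 + fib n = 3 * fib n.+2.
Proof. by rewrite !fibSS; lia. Qed.

Lemma fibSSS_le n : fib n.+3 <= 3 * fib n.+1.
Proof. by case: n => [|n] //; rewrite !fibSS; lia. Qed.

Lemma fib_le_five_thirds_pow n : 3 ^ n * fib n <= 5 ^ n.
Proof.
suff [] : 3 ^ n * fib n <= 5 ^ n /\ 3 ^ n.+1 * fib n.+1 <= 5 ^ n.+1 by [].
elim: n => // n [IH0 IH1]; split=> //.
by move: IH0 IH1; rewrite fibSS !expnS; nia.
Qed.

Lemma wseq11 a1 a2 j : wseq 1 1 a1 a2 j.+1 = fib j * a1 + fib j.+1 * a2.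
Proof.
elim/nat_ind2: j => [||j IH0 IH1]; [by rewrite /wseq /=; lia.. |].
by rewrite wseqSS IH0 IH1 (fibSS j.+1) (fibSS j); lia.
Qed.

Lemma frobenius_pos a b n : coprime a b -> 0 < a -> 0 < b -> a * b < n ->
  exists x y, [/\ 0 < x, 0 < y & a * x + b * y = n].
Proof.
move=> cop_ab a_gt0 b_gt0 abn.
have [u v Bezout _] := egcdnP b a_gt0; rewrite (eqP cop_ab) in Bezout.
pose x := if (u * n) %% b == 0 then b else (u * n) %% b.
have x_gt0 : 0 < x by rewrite /x; case: eqP => // /eqP; rewrite lt0n.
have x_le : x <= b by rewrite /x; case: eqP => // _; rewrite ltnW ?ltn_mod.
have ax_n : a * x = n %[mod b].
  have -> : a * x = a * (u * n) %[mod b].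
    by rewrite -modnMmr -[in RHS]modnMmr /x; case: eqP => [->|_]; rewrite ?modnn ?modn_mod.
  by rewrite mulnA [a * u]mulnC Bezout mulnDl mul1n mulnAC modnMDl.
have axn : a * x < n by apply: leq_ltn_trans abn; rewrite leq_mul2l x_le orbT.
have b_dvd : b %| n - a * x by rewrite -eqn_mod_dvd ?ax_n ?(ltnW axn).
exists x, ((n - a * x) %/ b); split=> //.
  by rewrite divn_gt0 // dvdn_leq // subn_gt0.
by rewrite [b * _]mulnC divnK // subnKC // ltnW.
Qed.

Lemma reaches11 n j : fib j.+1 * fib j.+2 < n -> reaches 1 1 n j.+3.
Proof.
move=> lt_n; have [x [y [x_gt0 y_gt0 <-]]] :=
  frobenius_pos (fib_coprime j.+1) (fib_gt0 j) (fib_gt0 j.+1) lt_n.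
by exists x, y; do 3!split=> //; rewrite walkE [_.-1]/= wseq11.
Qed.

(** * Pairs outside R *)

Definition Rlist' : seq (nat * nat) := [:: (2, 1); (1, 2); (1, 3); (1, 4)].
Definition Rlist : seq (nat * nat) := (1, 1) :: Rlist'.

Lemma forall_Rlist' (P : nat * nat -> Prop) :
  P (2, 1) -> P (1, 2) -> P (1, 3) -> P (1, 4) -> forall r, r \in Rlist' -> P r.
Proof. by move=> ? ? ? ? r; rewrite !inE => /orP[|/orP[|/orP[|]]] /eqP ->. Qed.

Lemma forall_Rlist (P : nat * nat -> Prop) :
  P (1, 1) -> P (2, 1) -> P (1, 2) -> P (1, 3) -> P (1, 4) ->
  forall r, r \in Rlist -> P r.
Proof. by move=> ? ? ? ? ? r; rewrite inE => /predU1P[->|]; last exact: forall_Rlist'. Qed.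

Lemma RsetE r : Rset r <-> r \in Rlist.
Proof.
split; last by apply: forall_Rlist; rewrite /Rset; tauto.
by case=> [|[|[|[|]]]] ->; rewrite !inE eqxx ?orbT.
Qed.

Lemma Rlist_gt0 : forall r, r \in Rlist -> 0 < r.1 /\ 0 < r.2.
Proof. exact: forall_Rlist. Qed.

Lemma notin_Rlist_cases al be : 0 < al -> 0 < be -> (al, be) \notin Rlist ->
  3 <= al \/ al = 2 /\ 2 <= be \/ al = 1 /\ 5 <= be.
Proof. by move=> al_gt0 be_gt0; rewrite !inE !xpair_eqE; lia. Qed.

(* f_j := F_{2j+1} satisfies f_{j+2} = 3 f_{j+1} - f_j and f_{j+1} <= 3 f_j, a
   recurrence dominated by al w_{j+1} + be w_j for every pair outside R. *)
Lemma wseq_ge_fib al be a1 a2 j : 0 < al -> 0 < be -> (al, be) \notin Rlist ->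
  0 < a1 -> 0 < a2 -> fib (2 * j.+2).+1 <= 2 * wseq al be a1 a2 j.+2.
Proof.
move=> al_gt0 be_gt0 /(notin_Rlist_cases al_gt0 be_gt0) alb a1_gt0 a2_gt0.
suff [] : fib (2 * j.+2).+1 <= 2 * wseq al be a1 a2 j.+2 /\
          fib (2 * j.+3).+1 <= 2 * wseq al be a1 a2 j.+3 by [].
elim: j => [|j [IH0 IH1]]; first by rewrite !wseqSS /wseq /=; nia.
have E3 : 2 * j.+3 = (2 * j.+2).+2 by rewrite mulnS.
have E4 : 2 * j.+4 = (2 * j.+2).+4 by rewrite !mulnS.
split=> //; rewrite E3 in IH1; rewrite E4 wseqSS.
have := fib_add4 (2 * j.+2).+1; have := fibSSS_le (2 * j.+2).
set u0 := wseq _ _ _ _ j.+2 in IH0 *; set u1 := wseq _ _ _ _ j.+3 in IH1 *.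
case: alb => [al_ge3 | [[-> be_ge2] | [-> be_ge5]]].
- by have := leq_mul al_ge3 (leqnn u1); lia.
- by have := leq_mul be_ge2 (leqnn u0); lia.
- by have := leq_mul be_ge5 (leqnn u0); lia.
Qed.

(* For k >= 3, n = w_k >= F_{2k-1} / 2 = (F_k^2 + F_{k-1}^2) / 2 > F_{k-1} F_k. *)
Lemma reaches11_of_notin_Rlist al be n k : 1 < n -> 0 < al -> 0 < be ->
  (al, be) \notin Rlist -> reaches al be n k -> reaches 1 1 n k.+1.
Proof.
move=> n_gt1 al_gt0 be_gt0 notR [a1 [a2 [a1_gt0 [a2_gt0 [k_gt0 hw]]]]].
case: k k_gt0 hw => [|[|j]] // _ hw; first by exists 1, n; repeat split; lia.
apply: reaches11; case: j hw => [_|j]; first exact: n_gt1.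
rewrite walkE [_.-1]/= => <-.
have := wseq_ge_fib j al_gt0 be_gt0 notR a1_gt0 a2_gt0.
have [-> _] := fib_doubling j.+2.
have : 2 * (fib j.+2 * fib j.+3) < fib j.+2 ^ 2 + fib j.+3 ^ 2.
  by rewrite (ltn_leqif (nat_Cauchy _ _)) neq_ltn fib_ltS.
by lia.
Qed.

Section MaximalIndex.
Variables n m : nat.
Hypotheses (n_gt1 : 1 < n)
           (noR : forall r, r \in Rlist -> ~ reaches r.1 r.2 n m.+1).

Lemma reaches_le_of_Rlist a b k : 0 < a -> 0 < b -> reaches a b n k -> k <= m.
Proof.
move=> a_gt0 b_gt0 hk; rewrite leqNgt; apply/negP => lt_mk.
have [abR | abNR] := boolP ((a, b) \in Rlist).
  exact: (noR abR (reaches_le a_gt0 b_gt0 (ltn0Sn m) lt_mk hk)).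
apply: (noR (mem_head (1, 1) Rlist')).
apply: (@reaches_le 1 1 n isT isT m.+1 k.+1 isT (leqW lt_mk)).
exact: reaches11_of_notin_Rlist hk.
Qed.

Lemma sbar_attained al be : 0 < al -> 0 < be -> coprime al be ->
  reaches al be n m -> s_ab al be n m /\ sbar n m.
Proof.
move=> al_gt0 be_gt0 cop_ab hm.
have sab : s_ab al be n m.
  by apply/(s_abE n al_gt0 be_gt0); split=> // k; apply: reaches_le_of_Rlist.
split=> //; split; first by exists al, be.
move=> s [a [b [a_gt0 b_gt0 _ /(s_abE _ a_gt0 b_gt0) [hs _]]]].
exact: reaches_le_of_Rlist hs.
Qed.

End MaximalIndex.

Lemma inS_in_Rlist n al be : 1 < n -> inS n al be -> (al, be) \in Rlist.
Proof.
move=> n_gt1 [al_gt0 be_gt0 _ [m [/(s_abE _ al_gt0 be_gt0) [hm _] [_ maxm]]]].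
have [//|notR] := boolP ((al, be) \in Rlist).
have [m' sab11] := @s_ab_exists 1 1 n isT isT (ltnW n_gt1).
have [_ max11] := (@s_abE 1 1 n isT isT m').1 sab11.
have := max11 _ (reaches11_of_notin_Rlist n_gt1 al_gt0 be_gt0 notR hm).
by have := maxm m' (ex_intro _ 1 (ex_intro _ 1 (And4 isT isT isT sab11))); lia.
Qed.

Lemma S_is_11_of_not_reaches n m : 1 < n -> s_ab 1 1 n m ->
  (forall r, r \in Rlist' -> ~ reaches r.1 r.2 n m) -> S_is_11 n.
Proof.
move=> n_gt1 sab11 noR'.
have [hm max11] := (@s_abE 1 1 n isT isT m).1 sab11.
have noR r : r \in Rlist -> ~ reaches r.1 r.2 n m.+1.
  rewrite inE => /predU1P[-> /max11 | rR' hr]; first by rewrite ltnn.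
  have /Rlist_gt0 [r1_gt0 r2_gt0] : r \in Rlist by rewrite inE rR' orbT.
  exact: (noR' _ rR' (reaches_le r1_gt0 r2_gt0 (reaches_gt0 hm) (leqnSn m) hr)).
have [_ sb] := @sbar_attained n m n_gt1 noR 1 1 isT isT (coprime1n 1) hm.
move=> al be; split=> [[al_gt0 be_gt0 _ [m' [sab sb']]] | [-> ->]]; last first.
  by split=> //; exists m.
rewrite -(is_greatest_unique sb sb') in sab.
have [hr _] := (s_abE n al_gt0 be_gt0 m).1 sab.
have [abR | abNR] := boolP ((al, be) \in Rlist).
  by move: abR; rewrite inE => /predU1P[[-> ->] // | /noR' /(_ hr)].
by have := max11 _ (reaches11_of_notin_Rlist n_gt1 al_gt0 be_gt0 abNR hr); rewrite ltnn.
Qed.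

Lemma reaches_Rlist'_of_not_S_is_11 n j : fib j.+1 * fib j.+2 < n ->
  ~ S_is_11 n -> exists2 r, r \in Rlist' & reaches r.1 r.2 n j.+3.
Proof.
move=> lt_n notS.
have n_gt1 : 1 < n by apply: leq_ltn_trans lt_n; rewrite muln_gt0 !fib_gt0.
have [m sab11] := @s_ab_exists 1 1 n isT isT (ltnW n_gt1).
have [_ max11] := (@s_abE 1 1 n isT isT m).1 sab11.
have le_jm := max11 _ (reaches11 lt_n).
apply: contrapT => noR'; apply/notS/(S_is_11_of_not_reaches n_gt1 sab11) => r rR' hr.
have /Rlist_gt0 [r1_gt0 r2_gt0] : r \in Rlist by rewrite inE rR' orbT.
by apply: noR'; exists r => //; exact: (reaches_le r1_gt0 r2_gt0 (ltn0Sn _) le_jm hr).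
Qed.

Lemma inS_of_reaches n m al be : 1 < n -> 0 < al -> 0 < be -> coprime al be ->
  reaches al be n m -> (forall r, r \in Rlist -> ~ reaches r.1 r.2 n m.+1) ->
  inS n al be.
Proof.
move=> n_gt1 al_gt0 be_gt0 cop_ab hm noR.
by split=> //; exists m; apply: sbar_attained.
Qed.

(** * Each pair of R is attained *)

(* The witnesses (up to w^{1,4}_40(1,1) ~ 5.3 * 10^15) are far too large for
   unary [nat], so the walks are evaluated on binary integers. *)
Section IntegerWalks.
Local Open Scope Z_scope.

Fixpoint wpairZ (al be a1 a2 : Z) (k : nat) : Z * Z :=
  if k is k'.+1 then
    let p := wpairZ al be a1 a2 k' in (p.2, al * p.2 + be * p.1)
  else (a1, a2).

Definition wseqZ (al be a1 a2 k : nat) : Z :=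
  (wpairZ (Z.of_nat al) (Z.of_nat be) (Z.of_nat a1) (Z.of_nat a2) k).1.

Lemma wseqZE al be a1 a2 k : wseqZ al be a1 a2 k = Z.of_nat (wseq al be a1 a2 k).
Proof.
rewrite /wseqZ; suff -> : wpairZ (Z.of_nat al) (Z.of_nat be) (Z.of_nat a1) (Z.of_nat a2) k =
          (Z.of_nat (wpair al be a1 a2 k).1, Z.of_nat (wpair al be a1 a2 k).2) by [].
by elim: k => //= k ->; congr pair; rewrite /= Nat2Z.inj_add !Nat2Z.inj_mul.
Qed.

Lemma not_reaches_of_Z al be n k :
  (forall x y : Z, 1 <= x -> 1 <= y ->
     wseqZ al be 1 0 k * x + wseqZ al be 0 1 k * y <> Z.of_nat n) ->
  ~ reaches al be n k.+1.
Proof.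
move=> noZ [x [y [x_gt0 [y_gt0 [_ hw]]]]].
apply: (noZ (Z.of_nat x) (Z.of_nat y)); [lia | lia |].
by rewrite -hw walkE [_.-1]/= (wseq_lin _ _ x) !wseqZE; lia.
Qed.

Lemma Z_of_nat_walk al be a1 a2 k :
  Z.of_nat (walk al be a1 a2 k.+1) = wseqZ al be a1 a2 k.
Proof. by rewrite wseqZE. Qed.

End IntegerWalks.

Ltac refute_reaches :=
  apply: not_reaches_of_Z; rewrite ?Z_of_nat_walk;
  repeat match goal with
  | |- context [wseqZ ?al ?be ?a1 ?a2 ?k] =>
      let v := eval vm_compute in (wseqZ al be a1 a2 k) in
      change (wseqZ al be a1 a2 k) with v
  | |- context [Z.of_nat ?n] =>
      let v := eval vm_compute in (Z.of_nat n) in change (Z.of_nat n) with v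
  end;
  lia.

Lemma inS_2_11 : inS 2 1 1.
Proof.
apply: (@inS_of_reaches 2 3) => //; first by exists 1, 1.
by apply: forall_Rlist; refute_reaches.
Qed.

Lemma inS_32_12 : inS 32 1 2.
Proof.
apply: (@inS_of_reaches 32 6) => //; first by exists 1, 2.
by apply: forall_Rlist; refute_reaches.
Qed.

Lemma inS_239_21 : inS 239 2 1.
Proof.
apply: (@inS_of_reaches 239 8) => //; first by exists 1, 1.
by apply: forall_Rlist; refute_reaches.
Qed.

Lemma inS_40_13 : inS 40 1 3.
Proof.
apply: (@inS_of_reaches 40 6) => //; first by exists 1, 1.
by apply: forall_Rlist; refute_reaches.
Qed.

Lemma walk14_gt1 : 1 < walk 1 4 1 1 40.
Proof. by rewrite walkE; apply: (@leq_trans 39); last exact: wseq_ge_index. Qed.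

(* 40 is the least k for which w^{1,4}_k(1,1) is not hit at index k + 1 by any
   pair of R. *)
Lemma inS_walk14 : inS (walk 1 4 1 1 40) 1 4.
Proof.
apply: (@inS_of_reaches _ 40 1 4 walk14_gt1 isT isT (coprime1n 4)).
  by exists 1, 1.
by apply: forall_Rlist; refute_reaches.
Qed.

Lemma Rlist_attained r : r \in Rlist -> exists2 n, 1 < n & inS n r.1 r.2.
Proof.
move: r; apply: forall_Rlist.
- by exists 2; last exact: inS_2_11.
- by exists 239; last exact: inS_239_21.
- by exists 32; last exact: inS_32_12.
- by exists 40; last exact: inS_40_13.
- exists (walk 1 4 1 1 40); [exact: walk14_gt1 | exact: inS_walk14].
Qed.

(** * Density *)

Lemma count_iota_le_size (a : pred nat) N (s : seq nat) :
  (forall n, 0 < n <= N -> a n -> n \in s) -> count a (iota 1 N) <= size s.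
Proof.
move=> sub_s; rewrite -size_filter uniq_leq_size ?filter_uniq ?iota_uniq // => n.
by rewrite mem_filter mem_iota add1n ltnS => /andP[an /sub_s]; apply.
Qed.

Definition lincombs (N P Q : nat) : seq nat :=
  [seq P * x.+1 + Q * y.+1 | x <- iota 0 (N %/ P), y <- iota 0 (N %/ Q)].

Lemma size_lincombs N P Q : size (lincombs N P Q) = N %/ P * (N %/ Q).
Proof. by rewrite size_allpairs !size_iota. Qed.

Lemma mem_lincombs N P Q x y : 0 < P -> 0 < Q -> 0 < x -> 0 < y ->
  P * x + Q * y <= N -> P * x + Q * y \in lincombs N P Q.
Proof.
move=> P_gt0 Q_gt0 /prednK <- /prednK <- le_N.
by apply: allpairs_f; rewrite mem_iota leq_divRL //; nia.
Qed.

Lemma size_lincombs_le D N P Q : D * N <= P * Q -> D * size (lincombs N P Q) <= N.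
Proof.
rewrite size_lincombs; have [->|N_gt0 le_PQ] := posnP N; first by rewrite div0n muln0.
rewrite -(leq_pmul2r N_gt0); apply: leq_trans (_ : N %/ P * (N %/ Q) * (P * Q) <= _).
  by rewrite mulnAC [_ * (P * Q)]mulnC leq_mul2r le_PQ orbT.
by rewrite mulnACA leq_mul // leq_divM.
Qed.

Lemma wseq_exp2_growth al be a1 a2 c i : 4 <= 2 * al + be ->
  2 ^ i <= c * wseq al be a1 a2 i -> 2 ^ i.+1 <= c * wseq al be a1 a2 i.+1 ->
  forall d, 2 ^ (i + d) <= c * wseq al be a1 a2 (i + d).
Proof.
move=> ab_ge4 IH0 IH1 d.
suff [] : 2 ^ (i + d) <= c * wseq al be a1 a2 (i + d) /\
          2 ^ (i + d).+1 <= c * wseq al be a1 a2 (i + d).+1 by [].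
elim: d => [|d [le0 le1]]; first by rewrite addn0.
rewrite addnS; split=> //; rewrite wseqSS !expnS in le1 *.
move: le0 le1; set u0 := wseq _ _ _ _ (i + d); set u1 := wseq _ _ _ _ (i + d).+1.
by nia.
Qed.

Lemma Rlist'_coef_growth (a b j : nat) : (a, b) \in Rlist' ->
  4 ^ j.+2 <= 32 * (wseq a b 1 0 j.+2 * wseq a b 0 1 j.+2).
Proof.
move=> abR'.
have [ab_ge4 [a_gt0 b_gt0]] : 4 <= 2 * a + b /\ 0 < a /\ 0 < b.
  by move: abR'; rewrite !inE !xpair_eqE; lia.
have leP : 2 ^ j.+2 <= 8 * wseq a b 1 0 j.+2.
  by rewrite -(add2n j); apply: wseq_exp2_growth => //; rewrite !wseqSS /wseq /=; nia.
have leQ : 2 ^ j.+2 <= 4 * wseq a b 0 1 j.+2.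
  by rewrite -(add1n j.+1); apply: wseq_exp2_growth => //; rewrite ?wseqSS /wseq /=; nia.
by rewrite -[4]/(2 * 2) expnMn; nia.
Qed.

Lemma reaches_mem_lincombs al be n N k :
  0 < wseq al be 1 0 k -> 0 < wseq al be 0 1 k -> n <= N ->
  reaches al be n k.+1 -> n \in lincombs N (wseq al be 1 0 k) (wseq al be 0 1 k).
Proof.
move=> P_gt0 Q_gt0 le_nN [x [y [x_gt0 [y_gt0 [_ hw]]]]].
by move: le_nN; rewrite -hw walkE [_.-1]/= wseq_lin; apply: mem_lincombs.
Qed.

Lemma bernoulli_nat a d k : a ^ k * (a + k * d) <= a * (a + d) ^ k.
Proof.
elim: k => [|k IHk]; first by rewrite !expn0 mul1n mul0n addn0 muln1.
have le_pow : a ^ k <= (a + d) ^ k.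
  by case: k {IHk} => [|k]; rewrite ?expn0 // leq_exp2r ?leq_addr.
have := leq_mul (leqnn a) IHk; have := leq_mul (leqnn (a * d)) le_pow.
rewrite !expnS; move: (a ^ k) ((a + d) ^ k) => A B; nia.
Qed.

(* F_{j+1} F_{j+2} <= (125/27) (25/9)^j, while (36/25)^j >= 1 + 11 j / 25. *)
Lemma fib_prod_le_pow4 D j : 100 * D ^ 2 <= j ->
  32 * D ^ 2 * (fib j.+1 * fib j.+2) <= 4 ^ j.+1.
Proof.
move=> le_j.
have hF : 27 * 9 ^ j * (fib j.+1 * fib j.+2) <= 125 * 25 ^ j.
  have := leq_mul (fib_le_five_thirds_pow j.+1) (fib_le_five_thirds_pow j.+2).
  by rewrite !expnS -[9]/(3 * 3) -[25]/(5 * 5) !expnMn; nia.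
have hB := bernoulli_nat 25 11 j.
rewrite -[25 + 11]/(4 * 9) expnMn in hB.
have T_gt0 : 0 < 9 ^ j by rewrite expn_gt0.
rewrite [4 ^ _]expnS; move: hF hB T_gt0.
move: (9 ^ j) (25 ^ j) (4 ^ j) (fib j.+1 * fib j.+2) (D ^ 2) le_j => T U V X E.
move=> le_j hF hB T_gt0; have le_E : 1100 * E <= 25 + j * 11 by lia.
rewrite -(@leq_pmul2l (297 * T)) ?muln_gt0 //.
have := leq_mul le_E (leqnn U); have := leq_mul (leqnn (32 * E)) hF.
by lia.
Qed.

Lemma exists_bracket (f : nat -> nat) J N : (forall k, k <= f k) -> f J <= N ->
  exists2 j, J <= j & f j <= N < f j.+1.
Proof.
move=> f_ge fJN.
have exP : exists j, (J <= j) && (f j <= N) by exists J; rewrite leqnn fJN.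
have ub j : (J <= j) && (f j <= N) -> j <= N by case/andP=> _; apply: leq_trans (f_ge j).
have [j /andP[Jj fjN] maxj] := ex_maxnP exP ub.
exists j => //; rewrite fjN ltnNge; apply/negP => fj1N.
by have := maxj j.+1; rewrite fj1N leqW // ltnn => /(_ isT).
Qed.

Definition Rlist'_lincombs (N j : nat) : seq (seq nat) :=
  [seq lincombs N (wseq r.1 r.2 1 0 j.+2) (wseq r.1 r.2 0 1 j.+2) | r <- Rlist'].

Lemma count_not_S_is_11_le N j :
  count (fun n => ~~ `[< S_is_11 n >]) (iota 1 N) <=
  (fib j.+1 * fib j.+2).+2 + sumn (shape (Rlist'_lincombs N j)).
Proof.
rewrite -(size_iota 0 (fib j.+1 * fib j.+2).+2) -size_flatten -size_cat.
apply: count_iota_le_size => n /andP[_ le_nN] /asboolPn notS.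
rewrite mem_cat mem_iota leq0n add0n andTb ltnS; case: leqP => // lt_n.
have [[a b] abR' hr] := reaches_Rlist'_of_not_S_is_11 (ltnW lt_n) notS.
have /andP[P_gt0 Q_gt0] : (0 < wseq a b 1 0 j.+2) && (0 < wseq a b 0 1 j.+2).
  have : 0 < 4 ^ j.+2 by rewrite expn_gt0.
  by rewrite -muln_gt0; have := Rlist'_coef_growth j abR'; lia.
apply/flattenP; exists (lincombs N (wseq a b 1 0 j.+2) (wseq a b 0 1 j.+2)).
  by apply/mapP; exists (a, b).
exact: reaches_mem_lincombs.
Qed.

Lemma mul_sumn_le D N (s : seq nat) :
  (forall x, x \in s -> D * x <= N) -> D * sumn s <= size s * N.
Proof.
elim: s => [|x s IHs] le_N /=; first by rewrite muln0.
rewrite mulnDr mulSn leq_add ?le_N ?mem_head //.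
by apply: IHs => y ys; apply: le_N; rewrite inE ys orbT.
Qed.

Lemma not_S_is_11_sparse D : 0 < D -> exists N0, forall N, N0 <= N ->
  D * count (fun n => ~~ `[< S_is_11 n >]) (iota 1 N) <= 6 * N.
Proof.
move=> D_gt0; pose f k := D * (fib k.+1 * fib k.+2).
have f_ge k : k <= f k.
  apply: leq_trans (leq_fib k) (leq_trans (leq_pmulr _ (fib_gt0 k.+1)) _).
  exact: leq_pmull.
exists (2 * D + f (100 * D ^ 2)) => N le_N.
have [j le_j /andP[fjN Nfj1]] :=
  exists_bracket f_ge (leq_trans (leq_addl _ _) le_N).
have sparse x : x \in shape (Rlist'_lincombs N j) -> D * x <= N.
  case/mapP=> _ /mapP[[a b] abR' ->] ->; apply: size_lincombs_le => /=.
  have := Rlist'_coef_growth j abR'; have := fib_prod_le_pow4 (leqW le_j).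
  have := leq_mul (leqnn D) (ltnW Nfj1).
  by rewrite /f expnS expn1; lia.
have := leq_mul (leqnn D) (count_not_S_is_11_le N j).
have size_Rlist'_lincombs : size (Rlist'_lincombs N j) = 4 by rewrite size_map.
have := mul_sumn_le sparse; rewrite size_map size_Rlist'_lincombs /f in fjN *.
by lia.
Qed.

Local Open Scope classical_set_scope.
Local Open Scope ring_scope.

Lemma sum_asbool_count (R : pzSemiRingType) (P : nat -> Prop) N :
  \sum_(1 <= n < N.+1) ((asbool (P n))%:R : R) = (count (fun n => `[< P n >]) (iota 1 N))%:R.
Proof.
rewrite -natr_sum -sum1_count; congr _%:R.
rewrite [RHS]big_mkcond /index_iota subSS subn0.
by apply: eq_bigr => n _; case: asbool.
Qed.

Lemma density_one_of_sparse (R : realType) (P : nat -> Prop) (c : nat) :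
  (forall D, (0 < D)%N -> exists N0, forall N, (N0 <= N)%N ->
     (D * count (fun n => ~~ `[< P n >]) (iota 1 N) <= c * N)%N) ->
  (fun N : nat => (\sum_(1 <= n < N.+1) (asbool (P n))%:R) / N%:R : R) @ \oo --> (1 : R).
Proof.
move=> sparse; apply/cvgrPdist_le => eps eps_gt0.
have c_eps_ge0 : 0 <= c%:R / eps :> R by rewrite divr_ge0 // ltW.
pose D := Num.bound (c%:R / eps : R).
have lt_D : c%:R / eps < D%:R :> R := archi_boundP c_eps_ge0.
have D_gt0 : (0 < D)%N by rewrite -(ltr_nat R); apply: le_lt_trans lt_D.
have [N0 le_N0] := sparse D D_gt0.
exists (maxn N0 1) => // N /=; rewrite geq_max => /andP[N0N N_gt0].
rewrite sum_asbool_count.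
have := le_N0 N N0N; set bad := count _ _; set good := count _ _.
have good_bad : (good + bad)%N = N by rewrite -[RHS](size_iota 1 N) count_predC.
rewrite -(ler_nat R) !natrM => le_bad.
have N_pos : 0 < N%:R :> R by rewrite ltr0n.
have -> : 1 - good%:R / N%:R = bad%:R / N%:R :> R.
  apply/eqP; rewrite subr_eq -mulrDl -natrD addnC good_bad.
  by rewrite divff ?(lt0r_neq0 N_pos).
rewrite ger0_norm ?divr_ge0 // ler_pdivrMr //.
have : c%:R <= eps * D%:R :> R by have := ltW lt_D; rewrite ler_pdivrMr // mulrC.
have : 0 <= bad%:R :> R by []; have : 0 < D%:R :> R by rewrite ltr0n.
by nra.
Qed.

Theorem theorem1p6 (R : realType) :
  (forall n : nat, (1 < n)%N ->
     forall alpha beta : nat, inS n alpha beta -> Rset (alpha, beta)) /\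
  (forall alpha beta : nat, Rset (alpha, beta) ->
     exists n : nat, (1 < n)%N /\ inS n alpha beta) /\
  ((fun N : nat =>
      ((\sum_(1 <= n < N.+1) (asbool (S_is_11 n))%:R) / N%:R : R))
     @ \oo --> (1 : R)).
Proof.
split; first by move=> n n_gt1 al be /(inS_in_Rlist n_gt1) /RsetE.
split; first by move=> al be /RsetE /Rlist_attained [n n_gt1 inSn]; exists n.
by apply: (density_one_of_sparse (c := 6)); apply: not_S_is_11_sparse.
Qed.
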